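(* Let $\Omega\subset\mathbb{R}^n$ be a convex body. For any $\varepsilon\in[0,\mathrm{In}(\Omega)]$, $$\mathrm{vol}(L_\varepsilon(\Omega))\le g(\varepsilon):=\mathrm{vol}(\Omega)\left(1-\Big(1-\frac{\varepsilon}{\mathrm{In}(\Omega)}\Big)^{n}\right).$$
   Context: A convex body is a convex, closed subset of $\mathbb{R}^n$ with non-empty interior. $\mathrm{vol}$ is $n$-dimensional Lebesgue measure. $\mathrm{In}(\Omega)$ is the inradius of $\Omega$: the radius of the largest ball contained in $\Omega$. The $\varepsilon$-inner neighbourhood is $L_\varepsilon(\Omega)=\{x\in\Omega:\|x-y\|\le\varepsilon\text{ for some }y\in\partial\Omega\}$. *)

From HB Require Import structures.
From mathcomp Require Import all_boot all_order all_algebra.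
From mathcomp Require Import all_classical all_reals all_analysis.
Set Implicit Arguments. Unset Strict Implicit. Unset Printing Implicit Defensive.
Import Order.TTheory GRing.Theory Num.Theory.
Import numFieldNormedType.Exports.
Local Open Scope classical_set_scope.
Local Open Scope ring_scope.

Section Defs.
Variables (R : realType) (n : nat).
Local Notation V := 'rV[R]_n.

(** Euclidean norm on R^n (the default norm on 'rV in MathComp is the sup norm). *)
Definition enorm (x : V) : R := Num.sqrt (\sum_(i < n) (x ord0 i) ^+ 2).

Definition eball (c : V) (r : R) : set V := [set x | enorm (x - c) <= r].

(** Convex body: convex, closed, non-empty interior
    (topology of 'rV = product topology = Euclidean topology). *)
Definition convex_body (O : set V) : Prop :=
  [/\ @convex_set R V O, closed O & interior O !=set0].

Definition bd (O : set V) : set V := closure O `\` interior O.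

(** Inradius, as an extended real (possibly +oo for unbounded bodies). *)
Definition inradius (O : set V) : \bar R :=
  ereal_sup [set r%:E | r in [set r : R | 0 <= r /\ exists c, eball c r `<=` O]].

Definition inner_nbhd (eps : R) (O : set V) : set V :=
  [set x | O x /\ exists2 y, bd O y & enorm (x - y) <= eps].

Definition box (a b : V) : set V := [set x | forall i, a ord0 i <= x ord0 i <= b ord0 i].
Definition box_vol (a b : V) : R := \prod_(i < n) (b ord0 i - a ord0 i).

(** n-dimensional Lebesgue (outer) measure: infimum of the total volume of
    countable covers by boxes.  It coincides with Lebesgue measure on
    Lebesgue-measurable (in particular closed) sets. *)
Definition vol (A : set V) : \bar R :=
  ereal_inf [set s : \bar R | exists a b : nat -> V,
     [/\ forall k i, a k ord0 i <= b k ord0 i,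
         A `<=` \bigcup_k box (a k) (b k) &
         s = (\sum_(0 <= k <oo) (box_vol (a k) (b k))%:E)%E]].
End Defs.

(* If the ball B(c, r) lies in the convex body E and 0 < mu, eps < (1 - mu) r,
   then every point of the homothetic copy mu E + (1 - mu) c is the centre of a
   ball of radius (1 - mu) r inside E, so this copy stays at distance more than
   eps from the boundary and is positively separated from L_eps(E).  Lebesgue
   outer measure is additive on positively separated sets, hence
   vol L_eps(E) + mu^n vol E <= vol E; letting r tend to In(E) and mu to
   1 - eps / In(E) gives the bound.  When vol E is infinite the bound is trivial
   unless eps = 0, and then L_0(E), a subset of the boundary, is null because it
   is covered by the sets L_0(E /\ [-j, j]^n), which have finite volume. *)

From HB Require Import structures.
From mathcomp Require Import all_boot all_order all_algebra.
From mathcomp Require Import all_classical all_reals all_analysis.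
From mathcomp Require Import ring lra.
Import Order.TTheory GRing.Theory Num.Theory.
Import numFieldNormedType.Exports.
Local Open Scope classical_set_scope.
Local Open Scope ring_scope.
Set Implicit Arguments. Unset Strict Implicit. Unset Printing Implicit Defensive.

(** * Euclidean norm and convexity *)

Section EuclideanNorm.
Variables (R : realType) (n : nat).
Local Notation V := 'rV[R]_n.
Implicit Types (x y z : V) (e : R).

Lemma sum_sqr_ge0 x : 0 <= \sum_(i < n) (x ord0 i) ^+ 2.
Proof. by apply: sumr_ge0 => i _; exact: sqr_ge0. Qed.

Lemma enorm_ge0 x : 0 <= enorm x.
Proof. exact: sqrtr_ge0. Qed.

Lemma enorm_sqr x : enorm x ^+ 2 = \sum_(i < n) (x ord0 i) ^+ 2.
Proof. by rewrite /enorm sqr_sqrtr // sum_sqr_ge0. Qed.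

Lemma normr_coord_le_enorm x i : `|x ord0 i| <= enorm x.
Proof.
rewrite -sqrtr_sqr /enorm ler_sqrt ?sum_sqr_ge0 //.
by rewrite (bigD1 i) //= lerDl; apply: sumr_ge0 => j _; exact: sqr_ge0.
Qed.

Lemma enorm_le_sum x : enorm x <= \sum_(i < n) `|x ord0 i|.
Proof.
have S0 : 0 <= \sum_(i < n) `|x ord0 i| by apply: sumr_ge0.
rewrite -(ger0_norm S0) -sqrtr_sqr /enorm ler_sqrt ?sqr_ge0 //.
rewrite expr2 mulr_suml; apply: ler_sum => i _.
rewrite -real_normK ?num_real // expr2 ler_wpM2l //.
by rewrite (bigD1 i) //= lerDl; apply: sumr_ge0.
Qed.

Lemma enorm_le_mulrn x e : (forall i, `|x ord0 i| <= e) -> enorm x <= e *+ n.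
Proof.
move=> xe; apply: le_trans (enorm_le_sum x) _.
by rewrite -[n in e *+ n]card_ord -sumr_const; apply: ler_sum => i _.
Qed.

Lemma enormZ (k : R) x : enorm (k *: x) = `|k| * enorm x.
Proof.
rewrite /enorm (eq_bigr (fun i => k ^+ 2 * (x ord0 i) ^+ 2)); last first.
  by move=> i _; rewrite mxE exprMn.
by rewrite -mulr_sumr sqrtrM ?sqr_ge0 // sqrtr_sqr.
Qed.

Lemma enorm0 : enorm (0 : V) = 0.
Proof. by rewrite -(scale0r 0) enormZ normr0 mul0r. Qed.

Lemma enorm_distC x y : enorm (x - y) = enorm (y - x).
Proof. by rewrite -opprB -scaleN1r enormZ normrN normr1 mul1r. Qed.

Lemma enorm_le0 x : enorm x <= 0 -> x = 0.
Proof.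
move=> x0; apply/matrixP => i j; rewrite (ord1 i) mxE; apply/normr0_eq0.
by apply/le_anti; rewrite normr_ge0 (le_trans (normr_coord_le_enorm x j)).
Qed.

Lemma cauchy_schwarz x y :
  \sum_(i < n) x ord0 i * y ord0 i <= enorm x * enorm y.
Proof.
have [/eqP|a0] := eqVneq (enorm x) 0.
  rewrite eq_le enorm_ge0 andbT => /enorm_le0 ->.
  by rewrite enorm0 mul0r big1 // => i _; rewrite mxE mul0r.
have [/eqP|b0] := eqVneq (enorm y) 0.
  rewrite eq_le enorm_ge0 andbT => /enorm_le0 ->.
  by rewrite enorm0 mulr0 big1 // => i _; rewrite mxE mulr0.
set a := enorm x; set b := enorm y; set S := \sum_(i < n) _.
have ab : 0 < a * b by rewrite mulr_gt0 // lt_neqAle eq_sym ?a0 ?b0 enorm_ge0.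
have : 0 <= \sum_(i < n) (b * x ord0 i - a * y ord0 i) ^+ 2.
  by apply: sumr_ge0 => i _; exact: sqr_ge0.
have -> : \sum_(i < n) (b * x ord0 i - a * y ord0 i) ^+ 2 =
    b ^+ 2 * (\sum_(i < n) (x ord0 i) ^+ 2) - 2 * a * b * S
    + a ^+ 2 * (\sum_(i < n) (y ord0 i) ^+ 2).
  rewrite /S !mulr_sumr -sumrN -!big_split /=.
  by apply: eq_bigr => i _; ring.
rewrite -!enorm_sqr -/a -/b.
nra.
Qed.

Lemma ler_enormD x y : enorm (x + y) <= enorm x + enorm y.
Proof.
have S0 : 0 <= enorm x + enorm y by rewrite addr_ge0 ?enorm_ge0.
rewrite -(ger0_norm S0) -sqrtr_sqr /enorm ler_sqrt ?sqr_ge0 //.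
rewrite -/(enorm x) -/(enorm y).
have -> : \sum_(i < n) ((x + y) ord0 i) ^+ 2 =
   enorm x ^+ 2 + 2 * \sum_(i < n) x ord0 i * y ord0 i + enorm y ^+ 2.
  rewrite !enorm_sqr mulr_sumr -!big_split /=; apply: eq_bigr => i _.
  by rewrite mxE; ring.
have := cauchy_schwarz x y; nra.
Qed.

Lemma ler_enorm_distD x y z : enorm (x - z) <= enorm (x - y) + enorm (y - z).
Proof. by have := ler_enormD (x - y) (y - z); rewrite addrA subrK. Qed.

End EuclideanNorm.

Section Geometry.
Variables (R : realType) (n : nat).
Local Notation V := 'rV[R]_n.
Implicit Types (x y c : V) (E : set V).

Definition homothety c (mu : R) x : V := mu *: x + (1 - mu) *: c.

Lemma homothety_coord c mu x i :
  homothety c mu x ord0 i = mu * x ord0 i + (1 - mu) * c ord0 i.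
Proof. by rewrite !mxE. Qed.

Lemma eball_center c (r : R) : 0 <= r -> eball c r c.
Proof. by move=> r0; rewrite /eball /= subrr enorm0. Qed.

Lemma convex_homothety E c mu x : @convex_set R V E ->
  E c -> E x -> 0 <= mu <= 1 -> E (homothety c mu x).
Proof.
move=> cE Ec Ex /andP[mu0 mu1].
have := cE x c (Itv01 mu0 mu1) (mem_set Ex) (mem_set Ec).
by rewrite inE.
Qed.

Lemma eball_homothety_sub E c (r mu : R) x : @convex_set R V E ->
  eball c r `<=` E -> E x -> 0 <= mu < 1 ->
  eball (homothety c mu x) ((1 - mu) * r) `<=` E.
Proof.
move=> cE cr Ex /andP[mu0 mu1] p; rewrite /eball /= => hp.
have m0 : 0 < 1 - mu by rewrite subr_gt0.
set q := c + (1 - mu)^-1 *: (p - homothety c mu x).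
have Eq : E q.
  apply: cr; rewrite /eball /= /q [c + _]addrC addrK enormZ.
  by rewrite ger0_norm ?invr_ge0 ?(ltW m0) // ler_pdivrMl.
have -> : p = homothety q mu x.
  rewrite /homothety /q scalerDr scalerA mulfV ?gt_eqF // scale1r.
  by rewrite addrA addrC subrK.
by apply: convex_homothety => //; rewrite mu0 ltW.
Qed.

Lemma ball_rowP x y (e : R) :
  ball x e y <-> 0 < e /\ forall i, `|x ord0 i - y ord0 i| < e.
Proof.
split=> [[e0 xy]|[e0 xy]]; first by split=> // i; exact: xy ord0 i.
by split=> // i j; rewrite (ord1 i); exact: xy.
Qed.

Lemma eball_interior E y (s : R) w :
  eball y s `<=` E -> enorm (w - y) < s -> interior E w.
Proof.
move=> yE ws; apply/nbhs_ballP.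
set d := s - enorm (w - y).
have d0 : 0 < d by rewrite subr_gt0.
exists (d / n.+1%:R); first by rewrite /= divr_gt0.
move=> v /ball_rowP [_ wv]; apply: yE; rewrite /eball /=.
have vw : enorm (v - w) <= (d / n.+1%:R) *+ n.
  by apply: enorm_le_mulrn => i; rewrite !mxE distrC ltW.
have dn : (d / n.+1%:R) *+ n < d.
  by rewrite -mulr_natr mulrAC ltr_pdivrMr ?ltr0Sn // ltr_pM2l // ltr_nat.
apply: le_trans (ler_enorm_distD v w y) _.
by rewrite -(subrK (enorm (w - y)) s) lerD2r ltW // (le_lt_trans vw).
Qed.

Lemma interior_eball E w : interior E w -> exists2 t : R, 0 < t & eball w t `<=` E.
Proof.
move=> /nbhs_ballP [e e0 wE]; exists (e / 2); first by rewrite divr_gt0.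
move=> v; rewrite /eball /= => vw; apply: wE; apply/ball_rowP; split => // i.
rewrite distrC; have := normr_coord_le_enorm (v - w) i; rewrite !mxE => vwi.
by rewrite (le_lt_trans vwi) // (le_lt_trans vw) // ltr_pdivrMr // ltr_pMr // ltr1n.
Qed.

Lemma convex_box (a b : V) : @convex_set R V (box a b).
Proof.
move=> x y t /set_mem xab /set_mem yab; apply/mem_set => i /=; rewrite !mxE.
have /andP[x1 x2] := xab i; have /andP[y1 y2] := yab i.
have t0 : 0 <= t%:num by [].
have t1 : t%:num <= 1 by [].
by rewrite /unstable.onem; apply/andP; split; nra.
Qed.

Lemma convex_setI E F : @convex_set R V E -> @convex_set R V F ->
  @convex_set R V (E `&` F).
Proof.
move=> cE cF x y t /set_mem[xE xF] /set_mem[yE yF]; apply/mem_set; split.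
  by apply/set_mem/cE; apply/mem_set.
by apply/set_mem/cF; apply/mem_set.
Qed.

End Geometry.

(** * The outer measure [vol] *)

Lemma nneseries_pair (R : realType) (g : nat * nat -> \bar R)
    (f : {bij [set: nat] >-> [set: nat * nat]}) :
  (forall p, (0 <= g p)%E) ->
  (\sum_(k <oo) g (f k) = \sum_(i <oo) \sum_(j <oo) g (i, j))%E.
Proof.
move=> g0; rewrite nneseries_esumT // -(reindex_esum _ [set: nat * nat] _ g bij).
rewrite nneseries_esumT; last by move=> i; apply: nneseries_ge0.
under [RHS]eq_esum do rewrite nneseries_esumT //.
rewrite esum_esum //; have -> : [set: nat] `*`` (fun=> [set: nat]) = [set: nat * nat].
  by apply/seteqP; split=> -[].
by apply: eq_esum => -[].
Qed.

Section OuterVolume.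
Variables (R : realType) (n : nat).
Local Notation V := 'rV[R]_n.
Local Open Scope ereal_scope.

Lemma box_vol_ge0 (a b : V) : (forall i, a ord0 i <= b ord0 i)%R ->
  (0 <= box_vol a b)%R.
Proof. by move=> ab; apply: prodr_ge0 => i _; rewrite subr_ge0. Qed.

Lemma vol_le_cover (A : set V) (a b : nat -> V) :
  (forall k i, a k ord0 i <= b k ord0 i)%R ->
  A `<=` \bigcup_k box (a k) (b k) ->
  vol A <= \sum_(k <oo) (box_vol (a k) (b k))%:E.
Proof. by move=> ab Aab; apply: ereal_inf_lbound; exists a, b. Qed.

Lemma vol_ge0 (A : set V) : 0 <= vol A.
Proof.
apply: le_ereal_inf_tmp => _ [a [b [ab _ ->]]].
by apply: nneseries_ge0 => k _ _; rewrite lee_fin box_vol_ge0.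
Qed.

Lemma vol_mono (A B : set V) : A `<=` B -> vol A <= vol B.
Proof.
move=> AB; apply: le_ereal_inf => _ [a [b [ab Bab ->]]].
by exists a, b; split => //; apply: subset_trans Bab.
Qed.

Lemma vol_near_cover (A : set V) (e : R) : (0 < e)%R -> vol A < +oo ->
  exists a b : nat -> V,
    [/\ forall k i, (a k ord0 i <= b k ord0 i)%R,
        A `<=` \bigcup_k box (a k) (b k) &
        \sum_(k <oo) (box_vol (a k) (b k))%:E <= vol A + e%:E].
Proof.
move=> e0 Afin; have : vol A \is a fin_num by rewrite ge0_fin_numE ?vol_ge0.
move=> /(lb_ereal_inf_adherent e0) [_ [a [b [ab Aab ->]]] lt].
by exists a, b; split => //; exact: ltW.
Qed.

Lemma vol_subadditive (A : set V) (F : nat -> set V) :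
  A `<=` \bigcup_j F j -> vol A <= \sum_(j <oo) vol (F j).
Proof.
move=> AF.
have [[i Fi]|/forallNP Ffin] := pselect (exists i, vol (F i) = +oo).
  rewrite (eseries_pinfty _ _ Fi) ?leey // => k _.
  by rewrite -ltNye (lt_le_trans _ (vol_ge0 _)).
apply/lee_addgt0Pr => e e0.
apply: (le_trans _ (epsilon_trick xpredT (fun k => vol_ge0 (F k)) (ltW e0))).
have /choice [G PG] : forall j, exists ab : (nat -> V) * (nat -> V),
    [/\ forall k i, (ab.1 k ord0 i <= ab.2 k ord0 i)%R,
        F j `<=` \bigcup_k box (ab.1 k) (ab.2 k) &
        \sum_(k <oo) (box_vol (ab.1 k) (ab.2 k))%:E
          <= vol (F j) + (e / (2 ^ j.+1)%:R)%:E].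
  move=> j; have ej : (0 < e / (2 ^ j.+1)%:R)%R by rewrite divr_gt0.
  have [|a [b cov]] := vol_near_cover (A := F j) ej; first by rewrite ltey; exact/eqP/Ffin.
  by exists (a, b).
have /card_esym/ppcard_eqP[f] := card_nat2.
pose g (p : nat * nat) := (box_vol ((G p.1).1 p.2) ((G p.1).2 p.2))%:E.
have G_le j k i : ((G j).1 k ord0 i <= (G j).2 k ord0 i)%R by case: (PG j).
have g0 p : 0 <= g p by rewrite lee_fin box_vol_ge0 // => i; exact: G_le.
have G_cov j : F j `<=` \bigcup_k box ((G j).1 k) ((G j).2 k) by case: (PG j).
apply: (@le_trans _ _ (\sum_(k <oo) g (f k))).
  apply: vol_le_cover => [k i|x /AF [j _ /G_cov [k _ xk]]]; first exact: G_le.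
  by exists (f^-1%FUN (j, k)) => //=; rewrite invK ?inE.
rewrite nneseries_pair //; apply: lee_nneseries => [j _ _|j _].
  by apply: nneseries_ge0 => k _ _; exact: g0.
by case: (PG j).
Qed.

Lemma vol_homothety_ge (A : set V) (mu : R) (c : V) : (0 < mu)%R ->
  (mu ^+ n)%:E * vol A <= vol (homothety c mu @` A).
Proof.
move=> mu0; apply: le_ereal_inf_tmp => _ [a [b [ab Aab ->]]].
pose pre (v : V) : V := mu^-1 *: (v - (1 - mu) *: c).
have preE v i : pre v ord0 i = (mu^-1 * (v ord0 i - (1 - mu) * c ord0 i))%R.
  by rewrite !mxE.
have volA : vol A <= \sum_(k <oo) (box_vol (pre (a k)) (pre (b k)))%:E.
  apply: vol_le_cover => [k i|x Ax].
    by rewrite !preE ler_pM2l ?invr_gt0 // lerD2r.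
  have [k _ xk] := Aab _ (ex_intro2 _ _ x Ax erefl).
  exists k => // i; rewrite !preE.
  have := xk i; rewrite !homothety_coord => /andP [l1 l2].
  by rewrite ler_pdivrMl // ler_pdivlMl //; apply/andP; split; lra.
have volE k : box_vol (pre (a k)) (pre (b k)) = (mu^-1 ^+ n * box_vol (a k) (b k))%R.
  rewrite /box_vol -[in (mu^-1 ^+ n)%R](card_ord n) -prodr_const -big_split /=.
  by apply: eq_bigr => i _; rewrite !preE; ring.
move: volA; under eq_eseriesr do rewrite volE EFinM.
rewrite nneseriesZl => [volA|k _]; last by rewrite lee_fin box_vol_ge0.
apply: le_trans (lee_wpmul2l _ volA) _; first by rewrite lee_fin exprn_ge0 ?ltW.
by rewrite muleA -EFinM -exprMn mulfV ?gt_eqF // expr1n mul1e.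
Qed.

End OuterVolume.

(** * Additivity on separated sets *)

Lemma exists_grid_index (R : realType) (a s x : R) (K : nat) :
  0 <= s -> a <= x <= a + K.+1%:R * s ->
  exists m : 'I_K.+1, a + m%:R * s <= x <= a + m.+1%:R * s.
Proof.
move=> s0 /andP[ax xK]; have [s_eq0|s_neq0] := eqVneq s 0.
  by exists ord0; rewrite s_eq0 !mulr0 !addr0 in xK *; rewrite ax xK.
have {s_neq0}spos : 0 < s by rewrite lt_neqAle eq_sym s_neq0.
set u := (x - a) / s.
have u0 : 0 <= u by rewrite divr_ge0 // subr_ge0.
have uK : u <= K.+1%:R by rewrite ler_pdivrMr //; lra.
have mK : (minn (Num.truncn u) K < K.+1)%N by rewrite ltnS geq_minr.
have xE : x = a + u * s by rewrite /u divfK ?gt_eqF // addrC subrK.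
exists (Ordinal mK) => /=; rewrite xE !lerD2l !ler_pM2r //; apply/andP; split.
  apply: le_trans (_ : (Num.truncn u)%:R <= u); first by rewrite ler_nat geq_minl.
  by rewrite truncn_le.
rewrite /minn; case: ltnP => _ //.
by have /andP[_ /ltW] := truncn_itv u0.
Qed.

Section Grid.
Variables (R : realType) (n : nat) (a b : 'rV[R]_n) (K : nat).
Local Notation V := 'rV[R]_n.
Local Notation cell := {ffun 'I_n -> 'I_K.+1}.

Definition grid_step i := (b ord0 i - a ord0 i) / K.+1%:R.
Definition cell_lo (t : cell) : V := \row_i (a ord0 i + (t i)%:R * grid_step i).
Definition cell_hi (t : cell) : V := \row_i (a ord0 i + (t i).+1%:R * grid_step i).
Definition cell_meets (C : set V) (t : cell) : bool :=
  `[< exists2 x, C x & box (cell_lo t) (cell_hi t) x >].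

Hypothesis ab : forall i, a ord0 i <= b ord0 i.

Lemma grid_step_ge0 i : 0 <= grid_step i.
Proof. by rewrite divr_ge0 ?subr_ge0. Qed.

Lemma cell_lo_le_hi t i : cell_lo t ord0 i <= cell_hi t ord0 i.
Proof. by rewrite !mxE lerD2l ler_wpM2r ?grid_step_ge0 // ler_nat. Qed.

Lemma box_vol_cell t : box_vol (cell_lo t) (cell_hi t) = \prod_i grid_step i.
Proof. by apply: eq_bigr => i _; rewrite !mxE -natr1; ring. Qed.

Lemma box_vol_grid : box_vol a b = (\prod_i grid_step i) *+ #|{: cell}|.
Proof.
rewrite card_ffun !card_ord -mulr_natr natrX -[in X in _ * X](card_ord n).
rewrite -prodr_const -big_split /=; apply: eq_bigr => i _.
by rewrite /grid_step mulfVK // pnatr_eq0.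
Qed.

Lemma grid_cover x : box a b x -> exists t : cell, box (cell_lo t) (cell_hi t) x.
Proof.
move=> xab; have /fin_all_exists [m xm] : forall i, exists m : 'I_K.+1,
    a ord0 i + m%:R * grid_step i <= x ord0 i <= a ord0 i + m.+1%:R * grid_step i.
  move=> i; apply: exists_grid_index; first exact: grid_step_ge0.
  by rewrite /grid_step mulrC divfK ?pnatr_eq0 // addrC subrK; exact: xab.
by exists [ffun i => m i] => i; rewrite !mxE ffunE.
Qed.

Lemma cell_coord_dist t x y i :
  box (cell_lo t) (cell_hi t) x -> box (cell_lo t) (cell_hi t) y ->
  `|x ord0 i - y ord0 i| <= grid_step i.
Proof.
move=> /(_ i) + /(_ i); rewrite !mxE -natr1 mulrDl mul1r addrA.
by move=> /andP[x1 x2] /andP[y1 y2]; rewrite ler_norml; apply/andP; split; lra.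
Qed.

End Grid.

Lemma exists_fine_grid (R : realType) (n : nat) (a b : 'rV[R]_n) (d : R) :
  0 < d -> (forall i, a ord0 i <= b ord0 i) ->
  exists K, forall i, grid_step a b K i < d.
Proof.
move=> d0 ab; set L := \sum_i (b ord0 i - a ord0 i).
have L0 : 0 <= L / d by rewrite divr_ge0 ?(ltW d0) // sumr_ge0 // => i _; rewrite subr_ge0.
exists (Num.truncn (L / d)) => i; rewrite ltr_pdivrMr // mulrC -ltr_pdivrMr //.
apply: le_lt_trans (_ : (b ord0 i - a ord0 i) / d <= L / d) _.
  rewrite ler_pM2r ?invr_gt0 // /L (bigD1 i) //= lerDl.
  by apply: sumr_ge0 => j _; rewrite subr_ge0.
by have /andP[] := truncn_itv L0.
Qed.

Section Separation.
Variables (R : realType) (n : nat).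
Hypothesis n_gt0 : (0 < n)%N.
Local Notation V := 'rV[R]_n.

Definition coord_separated (d : R) (A B : set V) :=
  forall x y, A x -> B y -> exists i, d <= `|x ord0 i - y ord0 i|.

Lemma box_vol0 (a : V) : box_vol a a = 0.
Proof. by rewrite /box_vol (bigD1 (Ordinal n_gt0)) //= subrr mul0r. Qed.

Lemma vol_le_seq_cover (A : set V) (s : seq (V * V)) :
  (forall p, p \in s -> forall i, p.1 ord0 i <= p.2 ord0 i) ->
  A `<=` [set x | exists2 p, p \in s & box p.1 p.2 x] ->
  (vol A <= (\sum_(p <- s) box_vol p.1 p.2)%:E)%E.
Proof.
(* past its end, s is padded with the empty boxes (0, 0) *)
move=> s_le As; pose q k := nth (0, 0) s k.
have q_le k i : (q k).1 ord0 i <= (q k).2 ord0 i.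
  rewrite /q; have [ks|sk] := ltnP k (size s); first exact/s_le/mem_nth.
  by rewrite nth_default.
apply: le_trans (vol_le_cover (a := fun k => (q k).1) (b := fun k => (q k).2) q_le _) _.
  by move=> x /As [p ps xp]; exists (index p s) => //; rewrite /q nth_index.
rewrite (nneseries_split 0 (size s)) => [|k _]; last by rewrite lee_fin box_vol_ge0.
rewrite add0n eseries0 ?adde0 => [|k sk _]; last by rewrite /q nth_default ?box_vol0.
by rewrite sumEFin (big_nth (0, 0)).
Qed.

Lemma vol_le_cells_meeting (C : set V) (a b : V) (K : nat) :
  (forall i, a ord0 i <= b ord0 i) ->
  (vol (C `&` box a b) <=
   (\sum_(t : {ffun 'I_n -> 'I_K.+1} | cell_meets a b C t) \prod_i grid_step a b K i)%:E)%E.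
Proof.
move=> ab; rewrite -(eq_bigr _ (fun t _ => box_vol_cell a b t)) -big_enum.
rewrite -(big_map (fun t => (cell_lo a b t, cell_hi a b t)) xpredT
  (fun p => box_vol p.1 p.2)).
apply: vol_le_seq_cover => [_ /mapP [t _ ->] i|x [Cx /(grid_cover K ab) [t xt]]].
  exact: cell_lo_le_hi.
exists (cell_lo a b t, cell_hi a b t) => //; apply: map_f.
by rewrite mem_enum; apply/asboolP; exists x.
Qed.

Lemma vol_separatedI_box (A B : set V) (a b : V) (d : R) : 0 < d ->
  (forall i, a ord0 i <= b ord0 i) -> coord_separated d A B ->
  (vol (A `&` box a b) + vol (B `&` box a b) <= (box_vol a b)%:E)%E.
Proof.
move=> d0 ab sepAB; have [K stepK] := exists_fine_grid d0 ab.
have w0 : 0 <= \prod_i grid_step a b K i.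
  by apply: prodr_ge0 => i _; exact: grid_step_ge0.
apply: le_trans (leeD (vol_le_cells_meeting A K ab) (vol_le_cells_meeting B K ab)) _.
rewrite -EFinD lee_fin (box_vol_grid a b K) -sumr_const.
rewrite !(big_mkcond (cell_meets _ _ _)) -big_split /=.
apply: ler_sum => t _; case: ifPn => [/asboolP [x Ax xt]|_].
  case: ifPn => [/asboolP [y By yt]|_]; last by rewrite addr0.
  (* a cell of side less than d cannot meet both A and B *)
  have [i /le_trans/(_ (cell_coord_dist i xt yt))] := sepAB x y Ax By.
  by move/(lt_le_trans (stepK i)); rewrite ltxx.
by rewrite add0r; case: ifP => _; rewrite ?lexx.
Qed.

Lemma vol_separatedU (A B : set V) (d : R) : 0 < d -> coord_separated d A B ->
  (vol A + vol B <= vol (A `|` B))%E.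
Proof.
move=> d0 sepAB; apply: le_ereal_inf_tmp => _ [a [b [ab ABab ->]]].
have pieces C : C `<=` A `|` B ->
    (vol C <= \sum_(k <oo) vol (C `&` box (a k) (b k)))%E.
  move=> CAB; apply: vol_subadditive => x Cx.
  by have [k _ xk] := ABab x (CAB x Cx); exists k.
apply: le_trans (leeD (pieces A (@subsetUl _ A B)) (pieces B (@subsetUr _ A B))) _.
rewrite -nneseriesD => [|k _ _|k _ _]; [|exact: vol_ge0|exact: vol_ge0].
apply: lee_nneseries => [k _ _|k _]; first by rewrite adde_ge0 ?vol_ge0.
exact: vol_separatedI_box d0 (ab k) sepAB.
Qed.

End Separation.

(** * Inner neighbourhoods *)

Lemma subrXX_le_mulrn (R : realDomainType) (a b : R) k :
  0 <= b -> b <= a -> a <= 1 -> a ^+ k - b ^+ k <= k%:R * (a - b).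
Proof.
move=> b0 ba a1; elim: k => [|k IH]; first by rewrite !expr0 subrr mul0r.
have bk0 : 0 <= b ^+ k by rewrite exprn_ge0.
have bk1 : b ^+ k <= 1 by rewrite exprn_ile1 // (le_trans ba).
have abk : b ^+ k <= a ^+ k by rewrite lerXn2r // ?nnegrE // (le_trans b0).
have h1 : 0 <= (1 - a) * (a ^+ k - b ^+ k) by rewrite mulr_ge0 // subr_ge0.
have h2 : 0 <= (a - b) * (1 - b ^+ k) by rewrite mulr_ge0 // subr_ge0.
by rewrite !exprS -natr1; nra.
Qed.

Lemma lee_onemX_limit (R : realType) (n : nat) (x : \bar R) (v lam : R) :
  0 <= v -> 0 < lam <= 1 ->
  (forall mu, 0 < mu < lam -> (x + (mu ^+ n * v)%:E <= v%:E)%E) ->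
  (x <= (v * (1 - lam ^+ n))%:E)%E.
Proof.
move=> v0 /andP[lam0 lam1] xmu; apply/lee_addgt0Pr => e e0.
pose eta := Num.min (lam / 2) (e / (v * n%:R + 1)).
have D0 : 0 < v * n%:R + 1 by rewrite ltr_pwDr // mulr_ge0.
have eta0 : 0 < eta by rewrite lt_min !divr_gt0.
have eta1 : eta <= lam / 2 by rewrite ge_min lexx.
have eta2 : eta * (v * n%:R + 1) <= e by rewrite -ler_pdivlMr // ge_min lexx orbT.
have mu0 : 0 < lam - eta by lra.
have := xmu (lam - eta); rewrite mu0 /= ltrBlDr ltrDl eta0 => /(_ isT).
have mulam : lam - eta <= lam by lra.
have := subrXX_le_mulrn n (ltW mu0) mulam lam1.
clear xmu; case: x => [r| |] powE; [|by []|by move=> _; exact: leNye].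
rewrite -EFinD !lee_fin => h.
have : v * (lam ^+ n - (lam - eta) ^+ n) <= v * (n%:R * eta).
  by rewrite ler_wpM2l // (le_trans powE) // opprB addrC subrK.
nra.
Qed.

Section InnerNeighbourhood.
Variables (R : realType) (n : nat).
Local Notation V := 'rV[R]_n.
Implicit Types (E : set V) (c w : V).

Lemma homothety_inner_nbhd_separated E c (r eps mu : R) : @convex_set R V E ->
  eball c r `<=` E -> 0 <= mu < 1 -> eps < (1 - mu) * r ->
  exists2 d, 0 < d & coord_separated d (homothety c mu @` E) (inner_nbhd eps E).
Proof.
move=> cE cr mu01 epsr; pose d := ((1 - mu) * r - eps) / n.+1%:R.
have d0 : 0 < d by rewrite divr_gt0 // subr_gt0.
have dn : d *+ n < (1 - mu) * r - eps.
  by rewrite -mulr_natr mulrAC ltr_pdivrMr ?ltr0Sn // ltr_pM2l ?subr_gt0 // ltr_nat.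
exists d => // _ z [x Ex <-] [_ [w [_ wE] zw]]; set y := homothety c mu x.
apply: contrapT => /forallNP y_near_z; apply: wE.
apply: (eball_interior (eball_homothety_sub cE cr Ex mu01)).
have yz : enorm (y - z) <= d *+ n.
  apply: enorm_le_mulrn => i; have := y_near_z i.
  by rewrite !mxE => /negP; rewrite -ltNge; exact: ltW.
have := ler_enorm_distD w z y; rewrite (enorm_distC w z) (enorm_distC z y); lra.
Qed.

Lemma vol_inner_nbhd_homothety E c (r eps mu : R) : (0 < n)%N ->
  @convex_set R V E -> eball c r `<=` E -> 0 <= eps -> 0 < mu < 1 ->
  eps < (1 - mu) * r ->
  (vol (inner_nbhd eps E) + (mu ^+ n)%:E * vol E <= vol E)%E.
Proof.
move=> n0 cE cr eps0 /andP[mu0 mu1] epsr.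
have Ec : E c by apply/cr/eball_center; nra.
have mu01 : 0 <= mu < 1 by rewrite ltW.
have [d d0 sep] := homothety_inner_nbhd_separated cE cr mu01 epsr.
rewrite addeC; apply: le_trans (leeD (vol_homothety_ge E c mu0) (lexx _)) _.
apply: le_trans (vol_separatedU n0 d0 sep) (vol_mono _).
by move=> _ [[x Ex <-]|[]] //; apply: convex_homothety => //; rewrite !ltW.
Qed.

Lemma vol_inner_nbhd_le_fin E (v eps lam : R) : (0 < n)%N ->
  @convex_set R V E -> vol E = v%:E -> 0 <= eps -> 0 < lam <= 1 ->
  (forall mu, 0 < mu < lam ->
     exists c r, eball c r `<=` E /\ eps < (1 - mu) * r) ->
  (vol (inner_nbhd eps E) <= (v * (1 - lam ^+ n))%:E)%E.
Proof.
move=> n0 cE Ev eps0 lam01 balls.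
have v0 : 0 <= v by rewrite -lee_fin -Ev vol_ge0.
apply: lee_onemX_limit => // mu mu_lam; have [c [r [cr epsr]]] := balls mu mu_lam.
rewrite EFinM -Ev; apply: vol_inner_nbhd_homothety n0 cE cr eps0 _ epsr.
by case/andP: lam01 mu_lam => _ lam1 /andP[-> /lt_le_trans ->].
Qed.

Lemma inradius_ge (O : set V) c (r : R) :
  0 <= r -> eball c r `<=` O -> (r%:E <= inradius O)%E.
Proof. by move=> r0 cO; apply: ereal_sup_ubound; exists r => //; split => //; exists c. Qed.

Lemma inradius_ball_approx (O : set V) (rho eps mu : R) :
  inradius O = rho%:E -> 0 < rho -> 0 <= eps -> mu < 1 - eps / rho ->
  exists c r, eball c r `<=` O /\ eps < (1 - mu) * r.
Proof.
move=> Orho rho0 eps0 mu_lt.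
have q0 : 0 <= eps / rho by rewrite divr_ge0 // ltW.
have mu1 : 0 < 1 - mu by lra.
have : ((eps / (1 - mu))%:E < inradius O)%E.
  by rewrite Orho lte_fin ltr_pdivrMr // mulrC -ltr_pdivrMr //; lra.
move=> /ereal_sup_gt [_ [r [_ [c cO]] <-]]; rewrite lte_fin ltr_pdivrMr // mulrC.
by exists c, r.
Qed.

Definition cube (j : R) : set V := box (const_mx (- j)) (const_mx j).

Lemma cubeP j x : cube j x <-> forall i, `|x ord0 i| <= j.
Proof.
split=> xj i; last by rewrite !mxE -ler_norml; exact: xj.
by move: (xj i); rewrite !mxE -ler_norml.
Qed.

Lemma cube_le j j' : j <= j' -> cube j `<=` cube j'.
Proof. by move=> jj' x /cubeP xj; apply/cubeP => i; apply: le_trans jj'. Qed.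

Lemma eball_sub_cube w (t : R) : eball w t `<=` cube (\sum_i `|w ord0 i| + t).
Proof.
move=> x wx; apply/cubeP => i.
have -> : x ord0 i = w ord0 i + (x - w) ord0 i by rewrite !mxE addrCA subrr addr0.
apply: le_trans (ler_normD _ _) _; apply: lerD.
  by rewrite (bigD1 i) //= lerDl sumr_ge0.
exact: le_trans (normr_coord_le_enorm _ i) wx.
Qed.

Lemma vol_cube_fin E j : (0 < n)%N -> 0 <= j -> (vol (E `&` cube j) < +oo)%E.
Proof.
move=> n0 j0; apply: le_lt_trans (vol_le_seq_cover n0
  (s := [:: (const_mx (- j), const_mx j)]) _ (fun x xj => _)) (ltry _).
  by move=> p; rewrite inE => /eqP -> i /=; rewrite !mxE; lra.
by exists (const_mx (- j), const_mx j); rewrite ?mem_head //; case: xj.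
Qed.

Lemma inner_nbhd0_setI E (C : set V) :
  inner_nbhd 0 E `&` C `<=` inner_nbhd 0 (E `&` C).
Proof.
move=> z [[Ez [y [_ yE] /enorm_le0/eqP]]]; rewrite subr_eq0 => /eqP zy Cz; rewrite -zy in yE.
split; first by split.
exists z; last by rewrite subrr enorm0.
split; first exact: subset_closure.
by move=> /(interiorS (@subIsetl _ E C)).
Qed.

Lemma vol_inner_nbhd0 E w (t : R) : (0 < n)%N ->
  @convex_set R V E -> 0 < t -> eball w t `<=` E -> vol (inner_nbhd 0 E) = 0%E.
Proof.
(* the pieces E /\ cube (k + J) all contain the ball, and have finite volume *)
move=> n0 cE t0 wE; set J := \sum_i `|w ord0 i| + t.
have J0 : 0 <= J by rewrite addr_ge0 ?sumr_ge0 ?ltW.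
pose F k := inner_nbhd 0 (E `&` cube (k%:R + J)).
have F0 k : vol (F k) = 0%E.
  have : vol (E `&` cube (k%:R + J)) \is a fin_num.
    by rewrite ge0_fin_numE ?vol_ge0 // vol_cube_fin // addr_ge0.
  move=> /fineK/esym Ev; apply/le_anti; rewrite vol_ge0 andbT.
  have cEk := convex_setI cE (@convex_box _ _ _ _ : @convex_set R V (cube (k%:R + J))).
  have := vol_inner_nbhd_le_fin (lam := 1) n0 cEk Ev (lexx 0).
  rewrite ltr01 lexx expr1n subrr mulr0; apply=> // mu /andP[_ mu1].
  exists w, t; split; last by rewrite mulr_gt0 ?subr_gt0.
  move=> x wx; split; first exact: wE.
  by apply: cube_le (eball_sub_cube wx); rewrite lerDr.
apply/le_anti; rewrite vol_ge0 andbT.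
apply: le_trans (vol_subadditive (F := F) _) _; last first.
  by rewrite eseries0 // => k _ _; exact: F0.
move=> z Lz; set S := \sum_i `|z ord0 i|.
exists (Num.truncn S).+1 => //; apply: inner_nbhd0_setI; split => //.
have zS : cube (S + 0) z by apply: eball_sub_cube; exact: eball_center.
apply: cube_le zS.
have S0 : 0 <= S by rewrite sumr_ge0.
have /andP[_ /ltW S_lt] := truncn_itv S0.
by rewrite addr0 (le_trans S_lt) // lerDl.
Qed.

End InnerNeighbourhood.

Unset Implicit Arguments.

Theorem mainTheorem3 (R : realType) (n : nat) (O : set 'rV[R]_n) (rho eps : R) :
  convex_body O ->
  inradius O = rho%:E ->
  0 <= eps -> eps <= rho ->
  (vol (inner_nbhd eps O) <= vol O * (1 - (1 - eps / rho) ^+ n)%:E)%E.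
Proof.
move=> [cO _ [w /interior_eball [t t0 wO]]] Orho eps0 eps_rho.
have rho0 : 0 < rho.
  by rewrite -lte_fin -Orho (lt_le_trans _ (inradius_ge (ltW t0) wO)) ?lte_fin.
case: n => [|m] in O cO w t0 wO Orho *.
  (* in dimension 0, a nonempty set contains balls of every radius *)
  have : ((`|rho| + 1)%:E <= inradius O)%E.
    apply: (inradius_ge (c := w)); first by rewrite addr_ge0.
    by move=> x _; rewrite (thinmx0 x) -(thinmx0 w); apply/wO/eball_center/ltW.
  rewrite Orho lee_fin => rho_big; exfalso; have := ler_norm rho; lra.
have [->|eps_neq] := eqVneq eps rho.
  by rewrite divff ?gt_eqF // subrr expr0n /= subr0 mule1; apply: vol_mono => x [].
have eps_lt : eps / rho < 1 by rewrite ltr_pdivrMr // mul1r lt_neqAle eps_neq.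
have eps_ge0 : 0 <= eps / rho by rewrite divr_ge0 // ltW.
case Ov: (vol O) => [v| |]; last by have := vol_ge0 O; rewrite Ov.
  rewrite -EFinM; apply: (vol_inner_nbhd_le_fin _ cO Ov eps0) => //.
    by apply/andP; split; lra.
  by move=> mu /andP[_ mu_lt]; apply: inradius_ball_approx Orho rho0 eps0 mu_lt.
have [eps0'|eps_neq0] := eqVneq eps 0.
  by rewrite eps0' mul0r subr0 expr1n subrr mule0 (vol_inner_nbhd0 _ cO t0 wO).
have q_gt0 : 0 < eps / rho by rewrite divr_gt0 // lt_neqAle eq_sym eps_neq0.
by rewrite gt0_mulye ?leey // lte_fin subr_gt0 expr_lt1 //; lra.
Qed.
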